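(* Let $w:[0,1]\to\mathbb{R}^+$ be a non-increasing differentiable function (extended to $\mathbb{R}$ by $w(y)=w(0)$ for $y\le0$, $w(y)=w(1)$ for $y\ge1$), and let $R$ be a $k\times k$ doubly stochastic matrix. If $$k>-\frac{w'(1/k)}{w(1/k)},$$ then $\frac1k\mathbf 1$ is a stable equilibrium of the ODE $\dot y=h(y)$, where $h(y)=\frac{\mathbf{w}(y)}{S_w(y)}R-y$.
   Context: $\mathbf 1=(1,\dots,1)\in\mathbb{R}^k$ (row vector). For $y\in\mathbb{R}^k$, $\mathbf{w}(y)=(w(y_1),\dots,w(y_k))$ and $S_w(y)=\sum_i w(y_i)$. $R$ doubly stochastic means nonnegative entries with all row and column sums $1$. An equilibrium $x^*$ of $\dot y=h(y)$ (i.e. $h(x^* )=0$) is called stable if all eigenvalues of the Jacobian matrix of $h$ at $x^*$ have negative real part. *)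

From HB Require Import structures.
From mathcomp Require Import all_boot all_order all_algebra.
From mathcomp Require Import all_classical all_reals all_analysis.
From mathcomp Require Import complex.
Set Implicit Arguments. Unset Strict Implicit. Unset Printing Implicit Defensive.
Import Order.TTheory GRing.Theory Num.Theory.
Import numFieldNormedType.Exports.
Local Open Scope classical_set_scope.
Local Open Scope ring_scope.

Definition wext (R : realType) (w : R -> R) (y : R) : R :=
  if y <= 0 then w 0 else if 1 <= y then w 1 else w y.

Definition wvec (R : realType) (k : nat) (w : R -> R) (y : 'rV[R]_k) : 'rV[R]_k :=
  \row_i wext w (y 0 i).

Definition Sw (R : realType) (k : nat) (w : R -> R) (y : 'rV[R]_k) : R :=
  \sum_i wext w (y 0 i).

Definition hfield (R : realType) (k : nat) (w : R -> R) (Rm : 'M[R]_k)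
  (y : 'rV[R]_k) : 'rV[R]_k :=
  ((Sw w y)^-1 *: wvec w y) *m Rm - y.

Definition doubly_stochastic (R : realType) (k : nat) (Rm : 'M[R]_k) : Prop :=
  (forall i j, 0 <= Rm i j) /\
  (forall i, \sum_j Rm i j = 1) /\
  (forall j, \sum_i Rm i j = 1).

Definition unif (R : realType) (k : nat) : 'rV[R]_k := const_mx (k%:R^-1).

Definition stable_equilibrium (R : realType) (k : nat)
  (f : 'rV[R]_k -> 'rV[R]_k) (x : 'rV[R]_k) : Prop :=
  f x = 0 /\ differentiable f x /\
  forall lam : R[i],
    eigenvalue (map_mx (fun a : R => (a%:C)%C) (jacobian f x)) lam ->
    complex.Re lam < 0.

Definition is_derivative_on01 (R : realType) (w w' : R -> R) : Prop :=
  forall x : R, 0 <= x <= 1 ->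
    (fun t => (w t - w x) / (t - x)) @
      within [set t : R | 0 <= t <= 1 /\ t != x] (nbhs x) --> w' x.

(* At y = (1/k) 1 every weight is w(1/k), so w(y)/S_w(y) = (1/k) 1, which R fixes because
   its columns sum to 1: this is the equilibrium.  For k >= 2 the point 1/k is interior to
   [0,1], and differentiating w(y)/S_w(y) there gives the Jacobian
   J = a (R - (1/k) 11^T) - I  with  a = w'(1/k) / (k w(1/k));  since w is nonincreasing,
   w' <= 0 and the hypothesis on k says exactly |a| < 1.  (For k = 1, w(y)/S_w(y) = 1 and
   J = -I.)  If v J = lam v with v <> 0, summing the coordinates gives (lam + 1) sum v = 0.
   Unless lam = -1 this kills the rank-one term, leaving a v R = (lam + 1) v; as a doubly
   stochastic R does not increase the max norm, |lam + 1| <= |a| < 1, hence Re lam < 0. *)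

From HB Require Import structures.
From mathcomp Require Import all_boot all_order all_algebra.
From mathcomp Require Import all_classical all_reals all_analysis.
From mathcomp Require Import complex.
From mathcomp Require Import ring lra.
Set Implicit Arguments. Unset Strict Implicit. Unset Printing Implicit Defensive.
Import Order.TTheory GRing.Theory Num.Theory.
Import numFieldNormedType.Exports.
Local Open Scope classical_set_scope.
Local Open Scope ring_scope.

Section Differentials.
Variables (R : numFieldType) (V W : normedModType R).

Lemma is_diff_sum n (f df : 'I_n -> V -> W) x :
  (forall i, is_diff x (f i) (df i)) ->
  is_diff x (fun y => \sum_i f i y) (fun v => \sum_i df i v).
Proof.
move=> fdf; have sumE (g : 'I_n -> V -> W) : (fun y => \sum_i g i y) = \sum_i g i.
  by apply/funext => y; rewrite fct_sumE.
rewrite !sumE; elim/big_ind2 : _ => // [|f1 df1 f2 df2]; first exact: is_diff_cst.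
exact: is_diffD.
Qed.

Lemma is_diffV (f df : V -> R) x : is_diff x f df -> f x != 0 ->
  is_diff x (fun y => (f y)^-1) (- (f x) ^- 2 \*: df).
Proof.
move=> fdf fx0; have f_diff : differentiable f x by exact: ex_diff.
by apply: DiffDef; [exact: differentiableV | rewrite diffV // diff_val].
Qed.

Lemma is_diffZl (k dk : V -> R) (u : W) x :
  is_diff x k dk -> is_diff x (fun y => k y *: u) (fun y => dk y *: u).
Proof.
move=> kdk; have k_diff : differentiable k x by exact: ex_diff.
by apply: DiffDef; [exact: differentiableZl | rewrite diffZl // diff_val].
Qed.

End Differentials.

Section MatrixDifferentials.
Variables (R : numFieldType) (V : normedModType R) (m n : nat).

Lemma is_diff_coord (i : 'I_m) (j : 'I_n) (A : 'M[R]_(m, n)) :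
  is_diff A (fun B : 'M[R]_(m, n) => B i j) (fun B => B i j).
Proof.
pose coord (B : 'M[R]_(m, n)) := B i j.
have coord_linear : linear coord by move=> a B C; rewrite /coord !mxE.
pose coordL : {linear 'M[R]_(m, n) -> R} :=
  HB.pack coord (GRing.isLinear.Build _ _ _ _ coord coord_linear).
have coord_cont : continuous coordL := @coord_continuous R m n i j.
rewrite (_ : (fun B : 'M[R]_(m, n) => B i j) = coordL) //; apply: DiffDef.
  exact: linear_differentiable.
by rewrite diff_lin.
Qed.

Lemma is_diff_mx (f df : V -> 'M[R]_(m, n)) x :
  (forall i j, is_diff x (fun y => f y i j) (fun v => df v i j)) -> is_diff x f df.
Proof.
move=> fdf; have sum_delta (g : V -> 'M[R]_(m, n)) :
    g = fun y => \sum_i \sum_j g y i j *: delta_mx i j.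
  by apply/funext => y; exact: matrix_sum_delta.
rewrite (sum_delta f) (sum_delta df).
by apply: is_diff_sum => i; apply: is_diff_sum => j; exact: is_diffZl.
Qed.

End MatrixDifferentials.

Lemma is_diff_mulmxr (R : numFieldType) m n p (M : 'M[R]_(n, p)) (A : 'M[R]_(m, n)) :
  is_diff A (mulmxr M) (mulmxr M).
Proof.
apply: is_diff_mx => i j.
have -> : (fun B => mulmxr M B i j) = fun B => \sum_l B i l * M l j.
  by apply/funext => B; rewrite !mxE.
by apply: is_diff_sum => l; exact: is_diffZl (is_diff_coord i l A).
Qed.

Lemma jacobian_mulmxr (R : numFieldType) m n (f : 'rV[R]_m -> 'rV[R]_n) x M :
  is_diff x f (mulmxr M) -> jacobian f x = M.
Proof.
move=> fM; rewrite /jacobian diff_val; apply/matrixP => i j.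
by rewrite mxE /= -rowE mxE.
Qed.

Lemma mulmx_const_mx (R : pzRingType) m n (v : 'rV[R]_m) (a : R) :
  v *m const_mx a = const_mx ((\sum_i v 0 i) * a) :> 'rV_n.
Proof. by apply/rowP => j; rewrite !mxE mulr_suml; apply: eq_bigr => i _; rewrite mxE. Qed.

Lemma mul_const_mx_col_sum1 (R : pzRingType) m n (M : 'M[R]_n) (a : R) :
  (forall j, \sum_i M i j = 1) -> const_mx a *m M = const_mx a :> 'M[R]_(m, n).
Proof.
move=> M_col; apply/matrixP => i j; rewrite !mxE -[RHS]mulr1 -(M_col j) mulr_sumr.
by apply: eq_bigr => l _; rewrite mxE.
Qed.

Lemma mx_norm_entry_le (K : numDomainType) m n (A : 'M[K]_(m, n)) i j :
  `|A i j| <= `|A|.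
Proof.
rewrite [leRHS]/Num.norm /= mx_normE -num_abs_le //.
by apply/bigmax_geP; right; exists (i, j) => //; rewrite -num_le /= normr_id.
Qed.

Lemma mx_norm_mulmx_col_stochastic (K : numDomainType) m n
    (v : 'rV[K]_m) (P : 'M[K]_(m, n)) :
  (forall i j, 0 <= P i j) -> (forall j, \sum_i P i j = 1) ->
  `|v *m P| <= `|v|.
Proof.
move=> P_ge0 P_col.
have [->|/mx_norm_neq0 [[i j] /= vP_norm]] := eqVneq `|v *m P| 0.
  exact: normr_ge0.
have -> : `|v *m P| = `|(v *m P) i j| := vP_norm.
rewrite mxE (ord1 i); apply: le_trans (ler_norm_sum _ _ _) _.
rewrite -[leRHS]mulr1 -(P_col j) mulr_sumr; apply: ler_sum => l _.
by rewrite normrM (ger0_norm (P_ge0 _ _)) ler_wpM2r // mx_norm_entry_le.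
Qed.

Lemma shifted_stochastic_eigenvalue_bound (K : numFieldType) k (P : 'M[K]_k)
    (a lam : K) (v : 'rV[K]_k) :
  (0 < k)%N -> (forall i j, 0 <= P i j) ->
  (forall i, \sum_j P i j = 1) -> (forall j, \sum_i P i j = 1) ->
  v != 0 -> v *m (a *: (P - const_mx k%:R^-1) - 1%:M) = lam *: v ->
  lam = -1 \/ `|lam + 1| <= `|a|.
Proof.
move=> k_gt0 P_ge0 P_row P_col v_neq0 eig.
pose e : 'cV[K]_k := const_mx 1.
set C : 'M[K]_k := const_mx k%:R^-1 in eig.
have Pe : P *m e = e.
  by apply/colP => i; rewrite !mxE -[RHS](P_row i); apply: eq_bigr => j _; rewrite mxE mulr1.
have Ce : C *m e = e.
  apply/colP => i; rewrite !mxE (eq_bigr (fun _ => k%:R^-1)) => [|j _]; last first.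
    by rewrite !mxE mulr1.
  by rewrite sumr_const card_ord -(mulr_natr k%:R^-1) mulVf // pnatr_eq0 -lt0n.
have C_factor : C = e *m const_mx k%:R^-1.
  by apply/matrixP => i j; rewrite !mxE big_ord1 !mxE mul1r.
have eig_e : (lam + 1) *: (v *m e) = 0.
  move: (congr1 (mulmxr e) eig) => /=.
  rewrite -mulmxA mulmxBl mul1mx -(scalemxAl a) mulmxBl Pe Ce subrr scaler0 sub0r.
  by rewrite mulmxN -scalemxAl => eig_e; rewrite scalerDl scale1r -eig_e addNr.
have [/eqP|lam1_neq0] := eqVneq (lam + 1) 0; first by rewrite addr_eq0 => /eqP; left.
right.
have ve : v *m e = 0 by move/eqP: eig_e; rewrite scaler_eq0 (negbTE lam1_neq0) => /eqP.
have vC : v *m C = 0 by rewrite C_factor mulmxA ve mul0mx.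
have vP : a *: (v *m P) = (lam + 1) *: v.
  move: eig; rewrite mulmxBr mulmx1 -scalemxAr mulmxBr vC subr0 => eig.
  by rewrite scalerDl scale1r -eig subrK.
have v_gt0 : 0 < `|v| by rewrite normr_gt0.
rewrite -(ler_pM2r v_gt0) -normrZ -vP normrZ ler_wpM2l //.
exact: mx_norm_mulmx_col_stochastic.
Qed.

Lemma Re_lt0_of_normD1_lt1 (R : rcfType) (z : R[i]) : `|z + 1| < 1 -> complex.Re z < 0.
Proof.
move=> /(le_lt_trans (leif_Re_Creal (z + 1)).1).
rewrite -complexRe raddfD /= -(rmorph1 (real_complex R)) ltcR.
by rewrite gtrDr.
Qed.

Lemma shifted_stochastic_eigenvalue_Re_lt0 (R : realType) k (P : 'M[R]_k)
    (a : R) (lam : R[i]) :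
  (0 < k)%N -> doubly_stochastic P -> `|a| < 1 ->
  eigenvalue (map_mx (real_complex R) (a *: (P - const_mx k%:R^-1) - 1%:M)) lam ->
  complex.Re lam < 0.
Proof.
move=> k_gt0 [P_ge0 [P_row P_col]] a_lt1 /eigenvalueP [v eig v_neq0].
set PC := map_mx (real_complex R) P.
have mapE : map_mx (real_complex R) (a *: (P - const_mx k%:R^-1) - 1%:M) =
            (a%:C)%C *: (PC - const_mx k%:R^-1) - 1%:M.
  by apply/matrixP => i j; rewrite !mxE rmorphB rmorphM rmorphB fmorphV !rmorph_nat.
have PC_ge0 i j : 0 <= PC i j by rewrite mxE ler0c.
have PC_row i : \sum_j PC i j = 1.
  rewrite -(rmorph1 (real_complex R)) -(P_row i) rmorph_sum.
  by apply: eq_bigr => j _; rewrite mxE.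
have PC_col j : \sum_i PC i j = 1.
  rewrite -(rmorph1 (real_complex R)) -(P_col j) rmorph_sum.
  by apply: eq_bigr => i _; rewrite mxE.
rewrite mapE in eig.
have [->|lam_le] :=
  shifted_stochastic_eigenvalue_bound k_gt0 PC_ge0 PC_row PC_col v_neq0 eig.
  by rewrite /= ltrN10.
apply: Re_lt0_of_normD1_lt1; apply: le_lt_trans lam_le _.
by rewrite normc_def /= expr0n /= addr0 sqrtr_sqr ltcR.
Qed.

Lemma nonincreasing_derive1_le0 (R : realFieldType) (f : R -> R) x :
  {homo f : a b /~ a <= b} -> derivable f x 1 -> 'D_1 f x <= 0.
Proof.
move=> f_nonincr f_der; apply: limr_le => //.
near=> h; have h_neq0 : h != 0 by near: h; exact: nbhs_dnbhs_neq.
rewrite /= -[h *: 1]/(h * 1) mulr1.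
move: h_neq0; rewrite neq_lt => /orP[h_lt0|h_gt0].
- by rewrite nmulr_rle0 ?invr_lt0 // subr_ge0 f_nonincr // gerDr ltW.
- by rewrite pmulr_rle0 ?invr_gt0 // subr_le0 f_nonincr // lerDr ltW.
Unshelve. all: by end_near. Qed.

Section Weights.
Variables (R : realType) (w w' : R -> R).
Hypothesis w_gt0 : forall x, 0 <= x <= 1 -> 0 < w x.
Hypothesis w_nonincr : forall x y, 0 <= x -> x <= y -> y <= 1 -> w y <= w x.
Hypothesis w'_deriv : is_derivative_on01 w w'.

Lemma wext_id y : 0 < y < 1 -> wext w y = w y.
Proof. by case/andP => y_gt0 y_lt1; rewrite /wext leNgt y_gt0 leNgt y_lt1. Qed.

Lemma wext_gt0 y : 0 < wext w y.
Proof.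
by rewrite /wext; case: (leP y 0); case: (leP 1 y) => *;
  apply: w_gt0; apply/andP; split; lra.
Qed.

Lemma wext_nonincreasing : {homo wext w : x y /~ x <= y}.
Proof.
move=> x y xy; rewrite /wext.
case: (leP y 0); case: (leP 1 y); case: (leP x 0); case: (leP 1 x) => *;
  first [lra | apply: w_nonincr; lra].
Qed.

Lemma is_derive_wext (c : R) : 0 < c < 1 -> is_derive c 1 (wext w) (w' c).
Proof.
move=> c01; have /andP[c_gt0 c_lt1] := c01.
suff quotient_cvg : (fun h => h^-1 *: ((wext w \o shift c) (h *: 1) - wext w c))
    @ 0^' --> w' c.
  by apply: DeriveDef; [apply/cvg_ex; exists (w' c) | exact: cvg_lim].
apply/cvgrPdist_lt => e e_gt0.
have /w'_deriv /cvgrPdist_lt /(_ e e_gt0) : 0 <= c <= 1 by rewrite !ltW.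
rewrite near_withinE => /nbhs_normP [d d_gt0 near_c].
rewrite near_withinE; apply/nbhs_normP.
exists (Num.min d (Num.min c (1 - c))); first by rewrite /= !lt_min d_gt0 c_gt0 subr_gt0.
move=> h /=; rewrite sub0r normrN !lt_min => /and3P[h_d h_c h_1c] h_neq0.
have hc01 : 0 < h + c < 1.
  by have := ler_norm h; have := ler_norm (- h); rewrite normrN => *; apply/andP; split; lra.
rewrite -[h *: 1]/(h * 1) mulr1 (wext_id hc01) (wext_id c01).
have := near_c (h + c); rewrite addrK mulrC; apply.
  by rewrite /ball_ /= opprD addrCA subrr addr0 normrN.
split; first by case/andP: hc01 => *; apply/andP; split; lra.
by rewrite -subr_eq0 addrK.
Qed.

Lemma is_diff_wext (c : R) : 0 < c < 1 -> is_diff c (wext w) ( *:%R^~ (w' c)).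
Proof.
move=> /is_derive_wext [w_der <-]; have w_diff := iffLR (derivable1_diffP _ _) w_der.
by apply: DiffDef; rewrite // diff1E // derive1E.
Qed.

Lemma derivative_on01_le0 (c : R) : 0 < c < 1 -> w' c <= 0.
Proof.
move=> /is_derive_wext [w_der <-].
exact: nonincreasing_derive1_le0 wext_nonincreasing w_der.
Qed.

Definition wshare k (y : 'rV[R]_k) : 'rV[R]_k := (Sw w y)^-1 *: wvec w y.

Lemma Sw_const k (c : R) : Sw w (const_mx c : 'rV_k) = k%:R * wext w c.
Proof.
rewrite /Sw (eq_bigr (fun _ => wext w c)) => [|i _]; last by rewrite mxE.
by rewrite sumr_const card_ord mulr_natl.
Qed.

Lemma wshare_const k (c : R) : (0 < k)%N ->
  wshare (const_mx c : 'rV_k) = const_mx k%:R^-1.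
Proof.
move=> k_gt0; apply/rowP => j.
by rewrite !mxE Sw_const invfM -mulrA mulVf ?mulr1 // gt_eqF ?wext_gt0.
Qed.

Lemma is_diff_wshare k (c d : R) : (0 < k)%N -> is_diff c (wext w) ( *:%R^~ d) ->
  is_diff (const_mx c : 'rV_k) (@wshare k)
    (mulmxr ((d / (k%:R * wext w c)) *: (1%:M - const_mx k%:R^-1))).
Proof.
move=> k_gt0 w_diff; set p : 'rV_k := const_mx c.
have wc_neq0 : wext w c != 0 by rewrite gt_eqF ?wext_gt0.
have g_diff i : is_diff p (fun y : 'rV_k => wext w (y 0 i)) (fun v => v 0 i *: d).
  have w_diff' : is_diff (p 0 i) (wext w) ( *:%R^~ d) by rewrite mxE.
  exact: is_diff_comp (is_diff_coord 0 i p) w_diff'.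
have S_diff : is_diff p (Sw w) (fun v => \sum_i v 0 i *: d) := is_diff_sum g_diff.
have Sp_neq0 : Sw w p != 0 by rewrite Sw_const mulf_neq0 // pnatr_eq0 -lt0n.
apply: is_diff_mx => i j; rewrite (ord1 i).
have -> : (fun y => wshare y 0 j) = (fun y => (Sw w y)^-1) * (fun y => wext w (y 0 j)).
  by apply/funext => y; rewrite !mxE.
apply: is_diff_eq (is_diffM (is_diffV S_diff Sp_neq0) (g_diff j)) _.
apply/funext => v; rewrite /= !fctE /= Sw_const.
rewrite -scalemxAr mulmxBr mulmx1 mulmx_const_mx !mxE -scaler_suml.
rewrite -![_ *: _]/(_ * _).
by field; rewrite wc_neq0 pnatr_eq0 -lt0n k_gt0.
Qed.

Lemma is_diff_wshare_dim1 (y : 'rV[R]_1) : is_diff y (@wshare 1) (mulmxr 0).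
Proof.
have -> : @wshare 1 = cst (const_mx 1 : 'rV[R]_1).
  apply/funext => z; apply/rowP => j.
  by rewrite (ord1 j) !mxE /Sw big_ord1 mulVf // gt_eqF // wext_gt0.
have -> : mulmxr 0 = 0 :> ('rV[R]_1 -> 'rV[R]_1) by apply/funext => v; rewrite /= mulmx0.
exact: is_diff_cst.
Qed.

Lemma is_diff_hfield k (Rm A : 'M[R]_k) (y : 'rV[R]_k) :
  is_diff y (@wshare k) (mulmxr A) -> is_diff y (hfield w Rm) (mulmxr (A *m Rm - 1%:M)).
Proof.
move=> share_diff; have -> : hfield w Rm = mulmxr Rm \o @wshare k - id by [].
apply: is_diff_eq (is_diffB (is_diff_comp share_diff (is_diff_mulmxr _ _)) (is_diff_id _)) _.
by apply/funext => v; rewrite /= mulmxBr mulmx1 mulmxA.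
Qed.

Lemma hfield_unif k (Rm : 'M[R]_k) : (0 < k)%N ->
  (forall j, \sum_i Rm i j = 1) -> hfield w Rm (unif R k) = 0.
Proof.
move=> k_gt0 Rm_col.
by rewrite /hfield -/(wshare _) wshare_const // mul_const_mx_col_sum1 // subrr.
Qed.

Lemma is_diff_wshare_unif k : (0 < k)%N ->
  - (w' k%:R^-1 / w k%:R^-1) < k%:R ->
  exists2 a : R, `|a| < 1 &
    is_diff (unif R k) (@wshare k) (mulmxr (a *: (1%:M - const_mx k%:R^-1))).
Proof.
move=> k_gt0 w'_bound; have [k1|k_neq1] := eqVneq k 1.
  by subst k; exists 0; rewrite ?normr0 // scale0r; exact: is_diff_wshare_dim1.
set x : R := k%:R^-1 in w'_bound *.
have x01 : 0 < x < 1.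
  by rewrite invr_gt0 ltr0n k_gt0 invf_lt1 ?ltr0n // ltr1n ltn_neqAle eq_sym k_neq1.
exists (w' x / (k%:R * wext w x)); last first.
  by apply: is_diff_wshare => //; exact: is_diff_wext.
have w'_le0 : w' x <= 0 := derivative_on01_le0 x01.
have wx_gt0 : 0 < w x by rewrite -(wext_id x01) wext_gt0.
have k_gt0' : (0 : R) < k%:R by rewrite ltr0n.
rewrite wext_id // ler0_norm; last by rewrite pmulr_lle0 // invr_gt0 mulr_gt0.
have -> : - (w' x / (k%:R * w x)) = - (w' x / w x) / k%:R by field; rewrite !gt_eqF.
by rewrite ltr_pdivrMr // mul1r.
Qed.

End Weights.

Theorem corollary2 (R : realType) (k : nat) (w w' : R -> R) (Rm : 'M[R]_k) :
  (0 < k)%N ->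
  (forall x : R, 0 <= x <= 1 -> 0 < w x) ->
  (forall x y : R, 0 <= x -> x <= y -> y <= 1 -> w y <= w x) ->
  is_derivative_on01 w w' ->
  doubly_stochastic Rm ->
  - (w' (k%:R^-1) / w (k%:R^-1)) < k%:R ->
  stable_equilibrium (hfield w Rm) (unif R k).
Proof.
move=> k_gt0 w_gt0 w_nonincr w'_deriv Rm_stoch w'_bound.
have [_ [_ Rm_col]] := Rm_stoch.
have [a a_lt1 share_diff] := is_diff_wshare_unif w_gt0 w_nonincr w'_deriv k_gt0 w'_bound.
have h_diff := is_diff_hfield Rm share_diff.
split; first exact: (hfield_unif w_gt0 k_gt0 Rm_col).
split; first exact: ex_diff.
rewrite (jacobian_mulmxr h_diff) -scalemxAl mulmxBl mul1mx mul_const_mx_col_sum1 // => lam.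
exact: shifted_stochastic_eigenvalue_Re_lt0.
Qed.
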